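(* For all $x\ge y\ge 1$ and $n>x+y$, the maximum possible number of edges in any task-dependency graph produced by the $(x,y)$ edge-addition process on $n$ vertices is $\binom{n}{2}+1-\binom{x}{2}-\binom{y+1}{2}$.
   Context: A task-dependency graph is a finite directed acyclic graph (no loops, no multiple edges). A vertex is initial if it has in-degree $0$ and terminal if it has out-degree $0$ (an isolated vertex is both). An $(x,y)$ task-dependency graph has exactly $x$ initial and exactly $y$ terminal vertices. The $(x,y)$ edge-addition process on $n$ vertices: start with the empty graph on $\{1,\dots,n\}$ and repeatedly add, uniformly at random, an edge $(a,b)$ with $a<b$ not yet present; if an addition would cause fewer than $x$ initial vertices or fewer than $y$ terminal vertices, it is cancelled. The process halts if the graph after some edge addition is an $(x,y)$ task-dependency graph, or if no more edges can be added; the produced graph is the final graph (over all possible runs), not necessarily an $(x,y)$ task-dependency graph. *)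

From mathcomp Require Import all_boot.
Set Implicit Arguments. Unset Strict Implicit. Unset Printing Implicit Defensive.

(* Graphs on vertex set 'I_n (vertices 0..n-1, standing for 1..n), given as a
   set of directed edges (a,b); the process only ever adds edges with a < b,
   so every graph considered is a DAG without loops or multiple edges. *)
Definition graph (n : nat) := {set 'I_n * 'I_n}.

Definition initials n (G : graph n) : {set 'I_n} :=
  [set v | [forall u, (u, v) \notin G]].
Definition terminals n (G : graph n) : {set 'I_n} :=
  [set v | [forall w, (v, w) \notin G]].

Definition is_tdg (x y n : nat) (G : graph n) : bool :=
  (#|initials G| == x) && (#|terminals G| == y).

(* edge e may be added to G (not yet present, a<b, and the addition is not
   cancelled, i.e. keeps >= x initial and >= y terminal vertices) *)
Definition addable (x y n : nat) (G : graph n) (e : 'I_n * 'I_n) : bool :=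
  [&& (e.1 < e.2)%N, e \notin G, x <= #|initials (e |: G)|
    & y <= #|terminals (e |: G)|].

(* graphs at which the (x,y) edge-addition process is still running
   (it has not halted) along some run *)
Inductive running (x y n : nat) : graph n -> Prop :=
| running0 : running x y set0
| runningS G e : running x y G -> addable x y G e ->
    ~~ is_tdg x y (e |: G) -> running x y (e |: G).

Definition final (x y n : nat) (G : graph n) : Prop :=
  (exists G0 e, [/\ running x y G0, addable x y G0 e, G = e |: G0 & is_tdg x y G])
  \/ (running x y G /\ forall e, ~~ addable x y G e).

From mathcomp Require Import all_boot zify.
Set Implicit Arguments. Unset Strict Implicit. Unset Printing Implicit Defensive.

(* Every graph met by the process has only edges (a, b) with a < b, so its edges and
   its non-adjacent pairs partition the 'C(n, 2) pairs of vertices, and the upper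
   bound amounts to finding 'C(x, 2) + 'C(y + 1, 2) - 1 non-adjacent pairs.  Pairs
   inside the initial vertices I, inside the terminal vertices T, or containing an
   isolated vertex (K = I :&: T) are never adjacent.  If the process stops at an
   (x, y) task-dependency graph, its last edge (a, b) took a out of T (or b out of
   I); then a (resp. b) is also non-adjacent to the other non-isolated terminal
   (resp. initial) vertices, at least y - |K| - 1 of them.  If it stops because no edge can be added, then no edge may join two
   non-isolated initial (or terminal) vertices, which forces y <= |K| <= x.  The bound is attained by
   taking all edges u < v except those inside {0, ..., x - 1} or inside
   {n - y - 1, ..., n - 1}, and adding (n - y - 1, n - 1) last. *)

Lemma bin2D p q : 'C(p + q, 2) = 'C(p, 2) + p * q + 'C(q, 2).
Proof. by elim: p => [|p IH]; rewrite ?bin0n // addSn !binS !bin1 IH; lia. Qed.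

Lemma bin2_sq m : 'C(m, 2) * 2 + m = m * m.
Proof. by elim: m => // m IH; rewrite binS bin1; lia. Qed.

Lemma bin2S_le y k c : y < c -> 'C(y.+1, 2) <= k * c + 'C(y - k, 2) + (y - k - 1) + 1.
Proof.
move=> lt_yc; have [le_yk|lt_ky] := leqP y k.
  have := leq_mul le_yk lt_yc; have := bin2_sq y; rewrite binS bin1 mulnS; lia.
have [q def_y] : exists q, y = k + q by exists (y - k); lia.
rewrite def_y addKn -addnS bin2D binS bin1 in lt_yc *.
have := leq_mul (leqnn k) lt_yc; have := bin2_sq k; rewrite !mulnS !mulnDr; lia.
Qed.

Lemma bin2_bound x y n k a b : x + y < n -> k <= x <= k + a -> y <= k + b ->
  'C(x, 2) + 'C(y.+1, 2) + 'C(n - k, 2) <= 'C(n, 2) + 'C(a, 2) + 'C(b, 2) + (y - k - 1) + 1.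
Proof.
move=> lt_n /andP[le_kx le_x] le_y.
have le_a : 'C(x - k, 2) <= 'C(a, 2) by apply: leq_bin2l; lia.
have le_b : 'C(y - k, 2) <= 'C(b, 2) by apply: leq_bin2l; lia.
have [p def_x] : exists p, x = k + p by exists (x - k); lia.
have [c def_n] : exists c, n = x + c by exists (n - x); lia.
have -> : n - k = p + c by lia.
rewrite def_x addKn in le_a; rewrite def_n def_x in lt_n *.
have := @bin2S_le y k c; rewrite -addnA !bin2D mulnDl; lia.
Qed.

Section Pairs.
Variable T : finType.
Implicit Types X Y : {set T}.

Definition pairs_in X : {set {set T}} := [set A : {set T} | A \subset X & #|A| == 2].

Lemma card_pairs_in X : #|pairs_in X| = 'C(#|X|, 2).
Proof. exact: cards_draws. Qed.

Lemma pairs_inS X Y : X \subset Y -> pairs_in X \subset pairs_in Y.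
Proof. by move=> sXY; apply/subsetP=> A; rewrite !inE => /andP[/subset_trans->]. Qed.

Lemma pairs_inI X Y : pairs_in (X :&: Y) = pairs_in X :&: pairs_in Y.
Proof. by apply/setP=> A; rewrite !inE subsetI andbACA andbb. Qed.

Lemma mem_pairs_in2 X u v : u != v -> ([set u; v] \in pairs_in X) = (u \in X) && (v \in X).
Proof. by move=> uv; rewrite inE cards2 uv andbT subUset !sub1set. Qed.

Lemma card_pairs_inU X Y : [disjoint X & Y] ->
  #|pairs_in X :|: pairs_in Y| = 'C(#|X|, 2) + 'C(#|Y|, 2).
Proof.
move=> dXY; have := cardsUI (pairs_in X) (pairs_in Y).
by rewrite -pairs_inI (disjoint_setI0 dXY) !card_pairs_in cards0 addn0.
Qed.

End Pairs.

Lemma card_gt1_lt n (A : {set 'I_n}) :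
  1 < #|A| -> exists u v, [/\ u \in A, v \in A & u < v].
Proof.
case/card_gt1P=> u [v [uA vA]]; rewrite neq_ltn => /orP[uv|vu].
  by exists u, v.
by exists v, u.
Qed.

Lemma card_lt_ord n x : x <= n -> #|[set v : 'I_n | v < x]| = x.
Proof.
move=> le_xn; have widen_inj : injective (widen_ord le_xn) by move=> i j [/val_inj].
rewrite -[RHS](card_ord x) -cardsT -(card_imset _ widen_inj).
apply: eq_card => v; rewrite inE; apply/idP/imsetP => [vx|[w _ ->]].
  by exists (Ordinal vx); rewrite ?inE //; apply: val_inj.
exact: (ltn_ord w).
Qed.

Lemma card_ge_ord n m : m <= n -> #|[set v : 'I_n | m <= v]| = n - m.
Proof.
move=> le_mn; have <- : ~: [set v : 'I_n | v < m] = [set v : 'I_n | m <= v].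
  by apply/setP=> v; rewrite !inE -leqNgt.
by have := cardsC [set v : 'I_n | v < m]; rewrite card_lt_ord // card_ord; lia.
Qed.

Section Graphs.
Variable n : nat.
Implicit Types (G H : graph n) (u v : 'I_n).

Definition forward G := forall e, e \in G -> e.1 < e.2.

Definition edge_pair (e : 'I_n * 'I_n) : {set 'I_n} := [set e.1; e.2].

Definition nonedges G := pairs_in [set: 'I_n] :\: edge_pair @: G.

Lemma edge_pair_inj G : forward G -> {in G &, injective edge_pair}.
Proof.
move=> fwG [a b] [c d] /fwG /= + /fwG /= cd; rewrite /edge_pair /= => + eq_ab_cd.
have : a \in [set c; d] /\ b \in [set c; d] by rewrite -eq_ab_cd !inE !eqxx orbT.
by case=> /set2P[]-> /set2P[]-> //; rewrite ?ltnn // => /(ltn_trans cd); rewrite ltnn.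
Qed.

Lemma card_nonedges G : forward G -> #|G| + #|nonedges G| = 'C(n, 2).
Proof.
move=> fwG; have sub : edge_pair @: G \subset pairs_in [set: 'I_n].
  apply/subsetP=> _ /imsetP[e /fwG lt_e ->].
  by rewrite mem_pairs_in2 ?inE // neq_ltn lt_e.
rewrite -(card_in_imset (edge_pair_inj fwG)) cardsD (setIidPr sub) subnKC.
  by rewrite card_pairs_in cardsT card_ord.
exact: subset_leq_card.
Qed.

Lemma mem_nonedges2 G u v : u != v ->
  ([set u; v] \in nonedges G) = ((u, v) \notin G) && ((v, u) \notin G).
Proof.
move=> uv; rewrite inE mem_pairs_in2 // !inE !andbT -negb_or; congr negb.
apply/imsetP/orP => [[[a b] ab_G] | [uv_G | vu_G]].
- rewrite /edge_pair /= => eq_uv; move: uv ab_G.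
  have : u \in [set a; b] /\ v \in [set a; b] by rewrite -eq_uv !inE !eqxx orbT.
  by case=> /set2P[]-> /set2P[]->; rewrite ?eqxx // => _ ?; [left | right].
- by exists (u, v).
- by exists (v, u) => //; rewrite /edge_pair setUC.
Qed.

Lemma no_edge_to_initial G u v : v \in initials G -> (u, v) \notin G.
Proof. by rewrite inE => /forallP. Qed.

Lemma no_edge_from_terminal G u v : u \in terminals G -> (u, v) \notin G.
Proof. by rewrite inE => /forallP. Qed.

Lemma pairs_in_initials G : pairs_in (initials G) \subset nonedges G.
Proof.
apply/subsetP=> A; rewrite inE => /andP[sAI /cards2P[u [v [uv defA]]]].
move: sAI; rewrite defA subUset !sub1set mem_nonedges2 // => /andP[uI vI].
by rewrite !no_edge_to_initial.
Qed.

Lemma pairs_in_terminals G : pairs_in (terminals G) \subset nonedges G.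
Proof.
apply/subsetP=> A; rewrite inE => /andP[sAT /cards2P[u [v [uv defA]]]].
move: sAT; rewrite defA subUset !sub1set mem_nonedges2 // => /andP[uT vT].
by rewrite !no_edge_from_terminal.
Qed.

Lemma initialsU1 G e : initials (e |: G) = initials G :\ e.2.
Proof.
apply/setP=> v; rewrite !inE; apply/forallP/andP => [noin | [ve /forallP noin] u].
  split; last by apply/forallP=> u; have := noin u; rewrite !inE negb_or => /andP[].
  by apply/eqP=> ve; have := noin e.1; rewrite ve !inE -surjective_pairing eqxx.
by rewrite !inE negb_or noin andbT; apply: contra ve => /eqP <-.
Qed.

Lemma terminalsU1 G e : terminals (e |: G) = terminals G :\ e.1.
Proof.
apply/setP=> v; rewrite !inE; apply/forallP/andP => [noout | [ve /forallP noout] w].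
  split; last by apply/forallP=> w; have := noout w; rewrite !inE negb_or => /andP[].
  by apply/eqP=> ve; have := noout e.2; rewrite ve !inE -surjective_pairing eqxx.
by rewrite !inE negb_or noout andbT; apply: contra ve => /eqP <-.
Qed.

Lemma initialsS G H : G \subset H -> initials H \subset initials G.
Proof.
move=> /subsetP sGH; apply/subsetP=> v; rewrite !inE => /forallP noin.
by apply/forallP=> u; apply: contra (noin u); apply: sGH.
Qed.

Lemma terminalsS G H : G \subset H -> terminals H \subset terminals G.
Proof.
move=> /subsetP sGH; apply/subsetP=> v; rewrite !inE => /forallP noout.
by apply/forallP=> w; apply: contra (noout w); apply: sGH.
Qed.

Lemma initials0 : initials (set0 : graph n) = setT.
Proof. by apply/setP=> v; rewrite !inE; apply/forallP=> u; rewrite inE. Qed.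

Lemma terminals0 : terminals (set0 : graph n) = setT.
Proof. by apply/setP=> v; rewrite !inE; apply/forallP=> u; rewrite inE. Qed.

Definition isolated G := initials G :&: terminals G.

(* The pairs inside [initials G], inside [terminals G] or meeting [isolated G]
   (see [mem_forced_pairs2]), written as a disjoint union to be counted. *)
Definition forced_pairs G :=
  pairs_in (initials G :\: isolated G) :|: pairs_in (terminals G :\: isolated G)
  :|: (pairs_in [set: 'I_n] :\: pairs_in (~: isolated G)).

Lemma mem_forced_pairs2 G u v : u != v ->
  ([set u; v] \in forced_pairs G) =
  [|| u \in isolated G, v \in isolated G,
      (u \in initials G) && (v \in initials G)
    | (u \in terminals G) && (v \in terminals G)].
Proof.
move=> uv; rewrite !in_setU in_setD !mem_pairs_in2 // /isolated.
rewrite !in_setD !in_setC !in_setI !in_setT.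
by move: (u \in initials G) (u \in terminals G) (v \in initials G) (v \in terminals G)
  => [] [] [] [].
Qed.

Lemma forced_pairs_sub G : forced_pairs G \subset nonedges G.
Proof.
apply/subsetP=> A forcedA; have : A \in pairs_in [set: 'I_n].
  move: forcedA; rewrite !in_setU in_setD => /orP[/orP[] | /andP[_ //]];
  exact/subsetP/pairs_inS/subsetT.
rewrite inE => /andP[_ /cards2P[u [v [uv defA]]]].
move: forcedA; rewrite defA mem_forced_pairs2 // mem_nonedges2 //.
case/or4P => [/setIP[uI uT] | /setIP[vI vT] | /andP[uI vI] | /andP[uT vT]].
- by rewrite no_edge_from_terminal // no_edge_to_initial.
- by rewrite no_edge_to_initial // no_edge_from_terminal.
- by rewrite !no_edge_to_initial.
- by rewrite !no_edge_from_terminal.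
Qed.

Lemma card_forced_pairs G :
  #|forced_pairs G| + 'C(n - #|isolated G|, 2) =
  'C(n, 2) + 'C(#|initials G :\: isolated G|, 2) + 'C(#|terminals G :\: isolated G|, 2).
Proof.
rewrite /forced_pairs; set K := isolated G.
set PIT := pairs_in (initials G :\: K) :|: pairs_in (terminals G :\: K).
set PK := pairs_in [set: 'I_n] :\: pairs_in (~: K).
have disj_IT : [disjoint initials G :\: K & terminals G :\: K].
  rewrite -setI_eq0; apply/eqP/setP=> v; rewrite /K /isolated !(in_setI, in_setD) in_set0.
  by move: (v \in initials G) (v \in terminals G) => [] [].
have sub_IT : PIT \subset pairs_in (~: K) by rewrite subUset !pairs_inS ?subsetDr.
have sub_K : pairs_in (~: K) \subset pairs_in [set: 'I_n] by apply/pairs_inS/subsetT.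
have disj : PIT :&: PK = set0.
  apply/setP=> A; rewrite in_setI in_setD in_set0.
  by apply/negP=> /and3P[/(subsetP sub_IT) ->].
have := cardsUI PIT PK; rewrite disj cards0 addn0 => ->.
have := cardsC K; have := subset_leq_card sub_K.
rewrite /PK cardsD (setIidPr sub_K) card_pairs_inU // !card_pairs_in cardsT !card_ord.
move: #|~: K| => c le_c card_c; have -> : n - #|K| = c by lia.
lia.
Qed.

Lemma forced_pairs_extra G a (S : {set 'I_n}) : a \notin S ->
  {in S, forall t, [set a; t] \in nonedges G :\: forced_pairs G} ->
  #|forced_pairs G| + #|S| <= #|nonedges G|.
Proof.
move=> aS extra; have pair_inj : {in S &, injective (fun t => [set a; t])}.
  move=> t t' tS _ eq_tt'; have : t \in [set a; t'] by rewrite -eq_tt' set22.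
  by case/set2P=> // ta; rewrite -ta tS in aS.
rewrite -(card_in_imset pair_inj) -cardsUI.
have -> : forced_pairs G :&: [set [set a; t] | t in S] = set0.
  apply/setP=> A; rewrite in_setI in_set0; apply/negP => /andP[fA /imsetP[t tS defA]].
  by have := extra t tS; rewrite -defA in_setD fA.
rewrite cards0 addn0 subset_leq_card // subUset forced_pairs_sub.
by apply/subsetP=> _ /imsetP[t tS ->]; have /setDP[] := extra t tS.
Qed.

Lemma forced_pairs_out G a b : a \notin terminals G -> (forall w, (a, w) \in G -> w = b) ->
  #|forced_pairs G| + (#|terminals G :\: isolated G| - 1) <= #|nonedges G|.
Proof.
move=> aT out_ab; set S := (terminals G :\: isolated G) :\ b.
apply: (@leq_trans (#|forced_pairs G| + #|S|)).
  by rewrite /S leq_add2l (cardsD1 b (terminals G :\: _)) leq_subLR leq_add2r leq_b1.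
apply: (forced_pairs_extra (a := a)) => [|t /setD1P[tb /setDP[tT tK]]].
  by move: aT; apply: contraNN => /setD1P[_ /setDP[]].
have ta : a != t by move: aT; apply: contraNneq => ->.
have tI : t \notin initials G by move: tK; apply: contraNN => tI; rewrite inE tI.
rewrite in_setD mem_forced_pairs2 // mem_nonedges2 // (@no_edge_from_terminal G t a tT).
have aK : a \notin isolated G by rewrite in_setI (negbTE aT) andbF.
rewrite (negbTE aK) (negbTE tK) (negbTE tI) (negbTE aT) !andbF /= andbT.
by apply/negP => /out_ab tb'; rewrite tb' eqxx in tb.
Qed.

Lemma forced_pairs_in G a b : b \notin initials G -> (forall w, (w, b) \in G -> w = a) ->
  #|forced_pairs G| + (#|initials G :\: isolated G| - 1) <= #|nonedges G|.
Proof.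
move=> bI in_ab; set S := (initials G :\: isolated G) :\ a.
apply: (@leq_trans (#|forced_pairs G| + #|S|)).
  by rewrite /S leq_add2l (cardsD1 a (initials G :\: _)) leq_subLR leq_add2r leq_b1.
apply: (forced_pairs_extra (a := b)) => [|t /setD1P[ta /setDP[tI tK]]].
  by move: bI; apply: contraNN => /setD1P[_ /setDP[]].
have tb : b != t by move: bI; apply: contraNneq => ->.
have tT : t \notin terminals G by move: tK; apply: contraNN => tT; rewrite inE tI.
rewrite in_setD mem_forced_pairs2 // mem_nonedges2 // (@no_edge_to_initial G b t tI).
have bK : b \notin isolated G by rewrite in_setI (negbTE bI).
rewrite (negbTE bK) (negbTE tK) (negbTE tT) (negbTE bI) !andbF /=.
by apply/negP => /in_ab ta'; rewrite ta' eqxx in ta.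
Qed.

Lemma card_initials_isolated G :
  #|initials G :\: isolated G| + #|isolated G| = #|initials G|.
Proof. by rewrite -[RHS](cardsID (isolated G)) (setIidPr (subsetIl _ _)) addnC. Qed.

Lemma card_terminals_isolated G :
  #|terminals G :\: isolated G| + #|isolated G| = #|terminals G|.
Proof. by rewrite -[RHS](cardsID (isolated G)) (setIidPr (subsetIr _ _)) addnC. Qed.

End Graphs.

Section Process.
Variables x y n : nat.
Implicit Types G : graph n.

Lemma runningP G : x < n -> y <= n ->
  running x y G <->
  [/\ forward G, x <= #|initials G|, y <= #|terminals G| & ~~ is_tdg x y G].
Proof.
move=> lt_xn le_yn; split.
  elim=> [|{}G e _ [fwG _ _ _] /and4P[lt_e _ le_xI le_yT] ntdg].
    rewrite /is_tdg initials0 terminals0 cardsT card_ord gtn_eqF //.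
    by split=> //; [move=> e; rewrite inE | exact: ltnW].
  by split=> // f /setU1P[-> // | /fwG].
have [m] := ubnP #|G|; elim: m G => // m IH G; rewrite ltnS => le_Gm [fwG le_xI le_yT ntdg].
have [->|[e eG]] := set_0Vmem G; first exact: running0.
have sub : G :\ e \subset G := subsetDl _ _.
have le_I := subset_leq_card (initialsS sub); have le_T := subset_leq_card (terminalsS sub).
rewrite -(setD1K eG); apply: runningS.
- apply: IH; first by move: le_Gm; rewrite (cardsD1 e G) eG.
  split; [by move=> f /setD1P[_ /fwG] | exact: leq_trans le_I | exact: leq_trans le_T |].
  apply: contra ntdg; rewrite /is_tdg => /andP[/eqP I_x /eqP T_y].
  by rewrite !eqn_leq le_xI le_yT -{1}I_x -{1}T_y le_I le_T.
- by rewrite /addable setD1K // fwG //= setD11 le_xI le_yT.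
- by rewrite setD1K.
Qed.

Lemma stuck_blocked G (u v : 'I_n) :
  (forall e, ~~ addable x y G e) -> u < v -> (u, v) \notin G ->
  (#|initials G| - (v \in initials G) < x) || (#|terminals G| - (u \in terminals G) < y).
Proof.
move=> stuck uv uvG; move: (stuck (u, v)).
rewrite /addable initialsU1 terminalsU1 /= uv uvG /= negb_and -!ltnNge.
by rewrite [#|initials G|](cardsD1 v) [#|terminals G|](cardsD1 u) !addKn.
Qed.

Lemma stuck_isolated G : 0 < x -> y <= x -> (forall e, ~~ addable x y G e) ->
  x <= #|initials G| -> y <= #|terminals G| -> ~~ is_tdg x y G ->
  y <= #|isolated G| <= x.
Proof.
move=> x_gt0 le_yx stuck le_xI le_yT ntdg.
have IK := card_initials_isolated G; have TK := card_terminals_isolated G.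
have [lt_xI | | eq_xI] := ltngtP x #|initials G|; last 2 first.
- by rewrite ltnNge le_xI.
- have lt_yT : y < #|terminals G|.
    by rewrite ltn_neqAle le_yT andbT eq_sym; rewrite /is_tdg eq_xI eqxx in ntdg.
  suff : #|terminals G :\: isolated G| <= 1 by lia.
  rewrite leqNgt; apply/negP => /card_gt1_lt[u [v [/setDP[uT _] /setDP[vT vK] uv]]].
  have vI : v \notin initials G by move: vK; apply: contraNN => vI; rewrite inE vI.
  have := stuck_blocked stuck uv (no_edge_from_terminal v uT).
  by rewrite uT (negbTE vI) subn0 subn1; case/orP; lia.
have [u [v [uI vI uv]]] := card_gt1_lt (leq_ltn_trans x_gt0 lt_xI).
have le_Ty : #|terminals G| <= y.
  have := leq_b1 (u \in terminals G).
  have := stuck_blocked stuck uv (no_edge_to_initial u vI).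
  by rewrite vI subn1; case/orP; lia.
suff : #|initials G :\: isolated G| <= 1 by lia.
rewrite leqNgt; apply/negP => /card_gt1_lt[u' [v' [/setDP[u'I u'K] /setDP[v'I _] uv']]].
have u'T : u' \notin terminals G by move: u'K; apply: contraNN => u'T; rewrite inE u'I.
have := stuck_blocked stuck uv' (no_edge_to_initial u' v'I).
by rewrite v'I (negbTE u'T) subn1 subn0; case/orP; lia.
Qed.

Lemma edge_count_bound G : x + y < n -> forward G ->
  #|isolated G| <= x <= #|initials G| -> y <= #|terminals G| ->
  #|forced_pairs G| + (y - #|isolated G| - 1) <= #|nonedges G| ->
  #|G| + 'C(x, 2) + 'C(y.+1, 2) <= 'C(n, 2) + 1.
Proof.
move=> lt_n fwG /andP[le_kx le_xI] le_yT slack.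
have IK := card_initials_isolated G; have TK := card_terminals_isolated G.
have := card_nonedges fwG; have := card_forced_pairs G.
have := @bin2_bound x y n #|isolated G|
  #|initials G :\: isolated G| #|terminals G :\: isolated G|.
lia.
Qed.

Lemma stuck_edge_count G : 0 < x -> y <= x -> x + y < n -> running x y G ->
  (forall e, ~~ addable x y G e) -> #|G| + 'C(x, 2) + 'C(y.+1, 2) <= 'C(n, 2) + 1.
Proof.
move=> x_gt0 le_yx lt_n runG stuck.
have lt_xn : x < n by lia.
have le_yn : y <= n by lia.
have [fwG le_xI le_yT ntdg] := (runningP G lt_xn le_yn).1 runG.
have /andP[le_yk le_kx] := stuck_isolated x_gt0 le_yx stuck le_xI le_yT ntdg.
apply: edge_count_bound; rewrite ?le_kx //.
have -> : y - #|isolated G| - 1 = 0 by lia.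
by rewrite addn0 subset_leq_card ?forced_pairs_sub.
Qed.

Lemma tdg_edge_count G0 e : y <= x -> x + y < n -> running x y G0 ->
  addable x y G0 e -> is_tdg x y (e |: G0) ->
  #|e |: G0| + 'C(x, 2) + 'C(y.+1, 2) <= 'C(n, 2) + 1.
Proof.
move=> le_yx lt_n runG0 /and4P[lt_e _ _ _] /andP[/eqP I_x /eqP T_y].
have lt_xn : x < n by lia.
have le_yn : y <= n by lia.
have [fwG0 _ _ ntdg0] := (runningP G0 lt_xn le_yn).1 runG0.
have fwG : forward (e |: G0) by move=> f /setU1P[-> // | /fwG0].
have IK := card_initials_isolated (e |: G0); have TK := card_terminals_isolated (e |: G0).
apply: edge_count_bound => //; first by rewrite I_x leqnn andbT; lia.
  by rewrite T_y.
(* Otherwise e changes neither I nor T, and G0 was already a task-dependency graph. *)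
have [e1T | e1T] := boolP (e.1 \in terminals G0).
  have e1_out : forall w, (e.1, w) \in e |: G0 -> w = e.2.
    move=> w /setU1P[/(congr1 snd) // | e1w].
    by have := no_edge_from_terminal w e1T; rewrite e1w.
  have e1_not_T : e.1 \notin terminals (e |: G0) by rewrite terminalsU1 setD11.
  have := forced_pairs_out e1_not_T e1_out; lia.
have [e2I | e2I] := boolP (e.2 \in initials G0).
  have e2_in : forall w, (w, e.2) \in e |: G0 -> w = e.1.
    move=> w /setU1P[/(congr1 fst) // | we2].
    by have := no_edge_to_initial w e2I; rewrite we2.
  have e2_not_I : e.2 \notin initials (e |: G0) by rewrite initialsU1 setD11.
  have := forced_pairs_in e2_not_I e2_in; lia.
move: ntdg0; rewrite /is_tdg -I_x -T_y initialsU1 terminalsU1.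
rewrite [#|initials G0|](cardsD1 e.2) [#|terminals G0|](cardsD1 e.1).
by rewrite (negbTE e1T) (negbTE e2I) !eqxx.
Qed.

End Process.

Section Extremal.
Variables n x m : nat.
Hypotheses (x_gt0 : 0 < x) (le_xm : x <= m) (lt_mn : m < n).

Definition dag_without_cliques : graph n :=
  [set e : 'I_n * 'I_n | [&& e.1 < e.2, x <= e.2 & e.1 < m]].
Local Notation G := dag_without_cliques.

Lemma forward_dag_without_cliques : forward G.
Proof. by move=> e; rewrite inE => /andP[]. Qed.

Lemma initials_dag_without_cliques : initials G = [set v : 'I_n | v < x].
Proof.
apply/setP=> v; rewrite !inE; apply/forallP/idP => [no_in | lt_vx u].
  rewrite ltnNge; apply/negP => le_xv.
  have gt0_n : 0 < n by lia.
  by have := no_in (Ordinal gt0_n); rewrite inE /=; lia.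
by rewrite inE; apply/negP => /and3P[_ /= le_xv _]; lia.
Qed.

Lemma terminals_dag_without_cliques : terminals G = [set v : 'I_n | m <= v].
Proof.
apply/setP=> v; rewrite !inE; apply/forallP/idP => [no_out | le_mv w].
  rewrite leqNgt; apply/negP => lt_vm.
  have lt_n1 : n.-1 < n by lia.
  by have := no_out (Ordinal lt_n1); rewrite inE /=; lia.
by rewrite inE; apply/negP => /and3P[_ _ /= lt_vm]; lia.
Qed.

Lemma nonedges_dag_without_cliques :
  nonedges G = pairs_in [set v : 'I_n | v < x] :|: pairs_in [set v : 'I_n | m <= v].
Proof.
apply/eqP; rewrite eqEsubset andbC -initials_dag_without_cliques.
rewrite -terminals_dag_without_cliques subUset.
rewrite (pairs_in_initials G) (pairs_in_terminals G) /=.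
apply/subsetP=> A nA; have : A \in pairs_in [set: 'I_n] by move: nA; rewrite inE => /andP[].
rewrite inE => /andP[_ /cards2P[u [v [uv defA]]]]; move: nA.
rewrite defA mem_nonedges2 // in_setU !mem_pairs_in2 // initials_dag_without_cliques.
rewrite terminals_dag_without_cliques !inE /=; move: uv; rewrite -(inj_eq val_inj) /=; lia.
Qed.

Lemma card_dag_without_cliques : #|G| + 'C(x, 2) + 'C(n - m, 2) = 'C(n, 2).
Proof.
have cardI : #|[set v : 'I_n | v < x]| = x by apply: card_lt_ord; lia.
have cardT : #|[set v : 'I_n | m <= v]| = n - m by apply: card_ge_ord; lia.
have disjIT : [disjoint [set v : 'I_n | v < x] & [set v : 'I_n | m <= v]].
  by rewrite -setI_eq0; apply/eqP/setP=> v; rewrite !inE; apply/negbTE/negP => /andP[]; lia.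
have := card_nonedges forward_dag_without_cliques.
by rewrite nonedges_dag_without_cliques card_pairs_inU // cardI cardT addnA.
Qed.

End Extremal.

Lemma final_extremal x y n : 0 < y -> y <= x -> x + y < n ->
  exists G : graph n, final x y G /\ #|G| + 'C(x, 2) + 'C(y.+1, 2) = 'C(n, 2) + 1.
Proof.
move=> y_gt0 le_yx lt_n; set m := n - y.+1.
have x_gt0 : 0 < x by lia.
have le_xm : x <= m by lia.
have lt_mn : m < n by lia.
have lt_n1 : n.-1 < n by lia.
set G0 := dag_without_cliques n x m; pose e : 'I_n * 'I_n := (Ordinal lt_mn, Ordinal lt_n1).
have eG0 : e \notin G0 by rewrite inE /= ltnn !andbF.
have cardI0 : #|initials G0| = x.
  by rewrite initials_dag_without_cliques // card_lt_ord; lia.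
have cardT0 : #|terminals G0| = y.+1.
  by rewrite terminals_dag_without_cliques // card_ge_ord; lia.
have cardI : #|initials (e |: G0)| = x.
  have e2I : e.2 \notin initials G0 by rewrite initials_dag_without_cliques // inE /=; lia.
  rewrite initialsU1; have := cardsD1 e.2 (initials G0).
  by rewrite (negbTE e2I) cardI0 add0n => ->.
have cardT : #|terminals (e |: G0)| = y.
  have e1T : e.1 \in terminals G0 by rewrite terminals_dag_without_cliques // inE.
  rewrite terminalsU1; have := cardsD1 e.1 (terminals G0).
  by rewrite e1T cardT0 add1n => -[->].
have runG0 : running x y G0.
  apply/runningP; [lia | lia | split].
  - exact: forward_dag_without_cliques.
  - by rewrite cardI0.
  - by rewrite cardT0 leqnSn.
  - by rewrite /is_tdg cardI0 cardT0 eqxx eqn_leq ltnn.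
exists (e |: G0); split.
  left; exists G0, e; split => //; last by rewrite /is_tdg cardI cardT !eqxx.
  by rewrite /addable eG0 cardI cardT !leqnn /=; lia.
have := card_dag_without_cliques x_gt0 le_xm lt_mn; rewrite -/G0 cardsU1 eG0.
have -> : n - m = y.+1 by lia.
lia.
Qed.

Lemma final_edge_count x y n (G : graph n) : 0 < y -> y <= x -> x + y < n ->
  final x y G -> #|G| + 'C(x, 2) + 'C(y.+1, 2) <= 'C(n, 2) + 1.
Proof.
move=> y_gt0 le_yx lt_n [[G0 [e [runG0 addG0 -> tdgG]]] | [runG stuck]].
  exact: tdg_edge_count.
by apply: stuck_edge_count => //; lia.
Qed.

Theorem mainTheorem14 (x y n : nat) :
  1 <= y -> y <= x -> x + y < n ->
  (exists G : graph n, final x y G /\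
     #|G| + 'C(x, 2) + 'C(y.+1, 2) = 'C(n, 2) + 1) /\
  (forall G : graph n, final x y G ->
     #|G| + 'C(x, 2) + 'C(y.+1, 2) <= 'C(n, 2) + 1).
Proof.
move=> y_gt0 le_yx lt_n; split; first exact: final_extremal.
by move=> G; apply: final_edge_count.
Qed.
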